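(* Let $n\ge1$, $d=2^n$, and let $|\psi\rangle$ be an $n$-qubit pure state. For a Clifford unitary $C$ and $\mathbf{s}\in\{0,1\}^n$ let $P(\mathbf{s}|C)=|\langle\mathbf{s}|C|\psi\rangle|^2$, and for $\mathbf{s}_1,\mathbf{s}_2,\mathbf{s}_3,\mathbf{s}_4\in\{0,1\}^n$ let $\mathcal{Q}(\mathbf{s}_1,\mathbf{s}_2,\mathbf{s}_3,\mathbf{s}_4)=\mathbb{E}_C\big[P(\mathbf{s}_1|C)P(\mathbf{s}_2|C)P(\mathbf{s}_3|C)P(\mathbf{s}_4|C)\big]$, where $\mathbb{E}_C$ is the average over the uniform distribution on the $n$-qubit Clifford group. Then $$M_2(|\psi\rangle)=-\log\sum_{\mathbf{s}_1,\dots,\mathbf{s}_4\in\{0,1\}^n}(-2)^{-\|\mathbf{s}_1\oplus\mathbf{s}_2\oplus\mathbf{s}_3\oplus\mathbf{s}_4\|}\,\mathcal{Q}(\mathbf{s}_1,\mathbf{s}_2,\mathbf{s}_3,\mathbf{s}_4)-\log d,$$ where $\oplus$ is bitwise addition mod 2 and $\|\mathbf{x}\|$ is the Hamming weight of $\mathbf{x}\in\{0,1\}^n$.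
   Context: Logarithms are base 2. $\mathcal{P}_n$ is the set of the $4^n$ $n$-qubit Pauli strings $\sigma_1\otimes\cdots\otimes\sigma_n$, $\sigma_i\in\{I,X,Y,Z\}$. The stabilizer 2-Rényi entropy is $M_2(|\psi\rangle)=-\log\sum_{P\in\mathcal{P}_n}\Xi_P(|\psi\rangle)^2-\log d$ with $\Xi_P(|\psi\rangle)=d^{-1}\langle\psi|P|\psi\rangle^2$. The Clifford group consists of the unitaries $C$ with $CPC^\dagger\in\{\pm1,\pm i\}\mathcal{P}_n$ for all $P\in\mathcal{P}_n$ (global phases do not affect $P(\mathbf{s}|C)$, so the uniform average is over the finite group modulo phases). $|\mathbf{s}\rangle$ denotes the computational basis state labeled by the bit string $\mathbf{s}$. *)

From HB Require Import structures.
From mathcomp Require Import all_boot all_order all_algebra.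
From mathcomp Require Import complex.
From mathcomp Require Import reals exp.
Set Implicit Arguments. Unset Strict Implicit. Unset Printing Implicit Defensive.
Import Order.TTheory GRing.Theory Num.Theory.
Local Open Scope ring_scope.

Section QDefs.
Variable R : realType.
Local Notation C := R[i].

Definition log2 (x : R) : R := ln x / ln 2.

Definition sqnorm (z : C) : R := (complex.Re z) ^+ 2 + (complex.Im z) ^+ 2.

Definition dagger m k (A : 'M[C]_(m, k)) : 'M[C]_(k, m) := (map_mx conjc A)^T.

Variable n : nat.
Local Notation d := (2 ^ n)%N.

(* Computational basis: the index i : 'I_(2^n) labels the bit string
   s = (s_0, ..., s_{n-1}) with i = sum_j s_j 2^j. *)
Definition bit (i : 'I_d) (j : 'I_n) : bool := odd (i %/ 2 ^ j).

(* single-qubit Paulis: 0 = I, 1 = X, 2 = Y, 3 = Z; entry (row a, column b) *)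
Definition pauli1 (p : 'I_4) (a b : bool) : C :=
  match val p with
  | 0 => if a == b then 1 else 0
  | 1 => if a != b then 1 else 0
  | 2 => if a == b then 0 else if a then 'i%C else - 'i%C
  | _ => if a == b then (if a then -1 else 1) else 0
  end.

Definition pauli_label := {ffun 'I_n -> 'I_4}.

(* the tensor product sigma_{p 0} (x) ... (x) sigma_{p (n-1)}, entrywise *)
Definition pauli (p : pauli_label) : 'M[C]_d :=
  \matrix_(i, k) \prod_(j < n) pauli1 (p j) (bit i j) (bit k j).

Definition unitary (U : 'M[C]_d) : Prop := U *m dagger U = 1%:M.

Definition clifford (U : 'M[C]_d) : Prop :=
  unitary U /\
  forall p : pauli_label, exists (q : pauli_label) (k : 'I_4),
    U *m pauli p *m dagger U = ('i%C ^+ k) *: pauli q.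

Definition phase_equiv (U V : 'M[C]_d) : Prop :=
  exists c : C, `|c| = 1 /\ U = c *: V.

Definition clifford_transversal (reps : seq 'M[C]_d) : Prop :=
  (forall U, U \in reps -> clifford U) /\
  (forall U, clifford U -> exists! j : 'I_(size reps), phase_equiv U (nth 0 reps j)).

Definition normalized (psi : 'cV[C]_d) : Prop := \sum_i sqnorm (psi i 0) = 1.

(* <psi| P |psi>, real for Hermitian P; we take its real part *)
Definition pauli_expect (psi : 'cV[C]_d) (p : pauli_label) : R :=
  complex.Re ((dagger psi *m pauli p *m psi) 0 0).

Definition Xi (psi : 'cV[C]_d) (p : pauli_label) : R :=
  (d%:R)^-1 * (pauli_expect psi p) ^+ 2.

Definition M2 (psi : 'cV[C]_d) : R :=
  - log2 (\sum_(p : pauli_label) (Xi psi p) ^+ 2) - log2 d%:R.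

Definition Pout (psi : 'cV[C]_d) (U : 'M[C]_d) (s : 'I_d) : R :=
  sqnorm ((U *m psi) s 0).

(* uniform average over the Clifford group modulo phases *)
Definition Qavg (psi : 'cV[C]_d) (reps : seq 'M[C]_d) (s1 s2 s3 s4 : 'I_d) : R :=
  (size reps)%:R^-1 *
  \sum_(U <- reps) (Pout psi U s1 * Pout psi U s2 * Pout psi U s3 * Pout psi U s4).

Definition xor_weight (s1 s2 s3 s4 : 'I_d) : nat :=
  #|[set j : 'I_n | bit s1 j (+) bit s2 j (+) bit s3 j (+) bit s4 j]|.

End QDefs.

From HB Require Import structures.
From mathcomp Require Import all_boot all_order all_algebra.
From mathcomp Require Import complex.
From mathcomp Require Import reals exp.
From mathcomp Require Import ring.
Import Order.TTheory GRing.Theory Num.Theory.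
Set Implicit Arguments. Unset Strict Implicit. Unset Printing Implicit Defensive.

(* Expanding [(-1/2) ^ b = (1 + 3 (-1) ^ b) / 4] bit by bit turns the weighted
   sum of the moments Q into [4^-n sum_z 3^|z| E_C <psi| C^dagger Z_z C |psi>^4],
   where Z_z is the Z-string supported on z: its expectation in C|psi> is the
   signed sum of the outcome probabilities P(s|C).  The term z = 0 is 1.  For
   z <> 0, the Clifford group acts transitively, up to phase, on non-identity
   Pauli strings: if P_a and P_b anticommute, the Clifford unitary
   (P_a + P_b)/sqrt 2 conjugates P_a to P_b, and any two non-identity strings
   anticommute with a common third one.  Hence C^dagger Z_z C runs equally
   often through every non-identity string, and the average is
   (4^n - 1)^-1 sum_(P <> I) <P>^4.  Since sum_(z <> 0) 3^|z| = 4^n - 1, the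
   total is 4^-n sum_P <P>^4 = sum_P Xi_P^2. *)

Lemma nat_bits_inj (n i k : nat) : i < 2 ^ n -> k < 2 ^ n ->
  (forall j, j < n -> odd (i %/ 2 ^ j) = odd (k %/ 2 ^ j)) -> i = k.
Proof.
elim: n i k => [|n IH] i k.
  by rewrite expn0 !ltnS !leqn0 => /eqP -> /eqP ->.
move=> hi hk hb.
have odd_eq : odd i = odd k by have := hb 0 isT; rewrite expn0 !divn1.
have half_eq : i %/ 2 = k %/ 2.
  apply: IH; try by rewrite ltn_divLR // -expnSr.
  by move=> j hj; rewrite -!divnMA -expnS; exact: hb.
by rewrite (divn_eq i 2) (divn_eq k 2) half_eq !modn2 odd_eq.
Qed.

Local Open Scope ring_scope.

Section Bits.
Variable n : nat.
Local Notation d := (2 ^ n)%N.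

Lemma bit_inj (i k : 'I_d) : (forall j, bit i j = bit k j) -> i = k.
Proof.
move=> h; apply/val_inj/(nat_bits_inj (ltn_ord i) (ltn_ord k)) => j hj.
exact: (h (Ordinal hj)).
Qed.

Lemma exists_bit_neq (i k : 'I_d) : i != k -> exists j, bit i j != bit k j.
Proof.
move=> neq_ik; apply/existsP; apply: contraR neq_ik => /existsPn h.
by apply/eqP/bit_inj => j; apply/eqP; have := h j; rewrite negbK.
Qed.

Definition bits (i : 'I_d) : {ffun 'I_n -> bool} := [ffun j => bit i j].

Lemma bits_bij : bijective bits.
Proof.
apply: inj_card_bij; last by rewrite card_ffun card_bool !card_ord.
by move=> i k /ffunP h; apply: bit_inj => j; have := h j; rewrite !ffunE.
Qed.

Lemma reindex_bits (V : nmodType) (F : {ffun 'I_n -> bool} -> V) :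
  \sum_(i : 'I_d) F (bits i) = \sum_f F f.
Proof. by rewrite [RHS](reindex bits) //; apply: onW_bij; exact: bits_bij. Qed.

End Bits.

Ltac case_lab x := case: x => [[|[|[|[|?]]]] ?] //.

(* With I, X, Y, Z labelled 00, 01, 10, 11 in binary, Pauli matrices
   multiply, up to phase, as their labels add under xor. *)
Definition lab1_mul (x y : 'I_4) : 'I_4 := inord (Nat.lxor x y).

Definition lab1_anticomm (x y : 'I_4) : bool := [&& x != 0, y != 0 & x != y].

Lemma lab1_mulC x y : lab1_mul x y = lab1_mul y x.
Proof. by case_lab x; case_lab y. Qed.

Lemma lab1_mulxx x : lab1_mul x x = 0.
Proof. by case_lab x; apply/val_inj; rewrite /= inordK. Qed.

Lemma lab1_mul_eq0 x y : lab1_mul x y = 0 -> x = y.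
Proof.
by case_lab x; case_lab y; move/(congr1 val); rewrite /= inordK // => h;
  first [by apply: val_inj | discriminate h].
Qed.

Lemma lab1_anticommC x y : lab1_anticomm x y = lab1_anticomm y x.
Proof. by case_lab x; case_lab y. Qed.

Lemma lab1_anticomm0 x : lab1_anticomm x 0 = false.
Proof. by case_lab x. Qed.

Lemma lab1_anticommxx x : lab1_anticomm x x = false.
Proof. by rewrite /lab1_anticomm eqxx !andbF. Qed.

Lemma lab1_anticommM x y z :
  lab1_anticomm x (lab1_mul y z) = lab1_anticomm x y (+) lab1_anticomm x z.
Proof.
by case_lab x; case_lab y; case_lab z; rewrite /lab1_anticomm /= -!val_eqE /= inordK.
Qed.

Lemma exists_lab1_anticomm_both x y : x != 0 -> y != 0 ->
  exists z, lab1_anticomm x z && lab1_anticomm y z.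
Proof.
by case_lab x; case_lab y => _ _;
  [exists (inord 2) | exists (inord 3) | exists (inord 2) | exists (inord 3)
  | exists (inord 1) | exists (inord 1) | exists (inord 2) | exists (inord 1)
  | exists (inord 1)]; rewrite /lab1_anticomm -!val_eqE /= inordK.
Qed.

Section Pauli1.
Variable R : realType.
Local Notation C := R[i].

Definition lab1_phase (x y : 'I_4) : C :=
  match val x, val y with
  | 1, 2 | 2, 3 | 3, 1 => 'i
  | 2, 1 | 3, 2 | 1, 3 => - 'i
  | _, _ => 1
  end.

Definition lab1_sign (x y : 'I_4) : C := if lab1_anticomm x y then -1 else 1.

Lemma pauli1_mul x y a b :
  \sum_(c : bool) pauli1 R x a c * pauli1 R y c b =
  lab1_phase x y * pauli1 R (lab1_mul x y) a b.
Proof.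
have mul_ii : 'i * 'i = -1 :> C by rewrite -expr2 sqr_i.
case_lab x; case_lab y; case: a; case: b;
  rewrite big_bool /pauli1 /lab1_phase /lab1_mul /= ?inordK //=;
  by rewrite ?(mul0r, mulr0, mul1r, mulr1, add0r, addr0, mulrN, mulNr, opprK, mul_ii).
Qed.

Lemma lab1_phaseC x y : lab1_phase x y = lab1_sign x y * lab1_phase y x.
Proof.
by case_lab x; case_lab y; rewrite /lab1_sign /lab1_phase /= ?mul1r ?mulN1r ?opprK.
Qed.

Lemma lab1_phasexx x : lab1_phase x x = 1.
Proof. by case_lab x. Qed.

Lemma lab1_signM x y z :
  lab1_sign x (lab1_mul y z) = lab1_sign x y * lab1_sign x z.
Proof.
by rewrite /lab1_sign lab1_anticommM; case: lab1_anticomm; case: lab1_anticomm;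
  rewrite ?mulN1r ?opprK ?mul1r.
Qed.

Lemma pauli1_conj x a b : ((pauli1 R x a b)^*)%C = pauli1 R x b a.
Proof.
by case_lab x; case: a; case: b; apply/eqP;
  rewrite /pauli1 eq_complex /= ?oppr0 ?opprK ?eqxx.
Qed.

Lemma pauli1_trace x : \sum_(b : bool) pauli1 R x b b = if x == 0 then 2 else 0.
Proof. by case_lab x; rewrite big_bool /pauli1 /= ?addr0 ?addNr. Qed.

End Pauli1.

Section PauliLabels.
Variable n : nat.
Implicit Types p q r : pauli_label n.

Definition lab_id : pauli_label n := [ffun => 0].

Definition lab_mul p q : pauli_label n := [ffun j => lab1_mul (p j) (q j)].

Definition lab_single (k : 'I_n) (x : 'I_4) : pauli_label n :=
  [ffun j => if j == k then x else 0].

Lemma lab_mulC p q : lab_mul p q = lab_mul q p.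
Proof. by apply/ffunP => j; rewrite !ffunE lab1_mulC. Qed.

Lemma lab_mulxx p : lab_mul p p = lab_id.
Proof. by apply/ffunP => j; rewrite !ffunE lab1_mulxx. Qed.

Lemma lab_mul_eq_id p q : lab_mul p q = lab_id -> p = q.
Proof.
by move=> /ffunP h; apply/ffunP => j; have := h j; rewrite !ffunE => /lab1_mul_eq0.
Qed.

Lemma exists_lab_neq0 p : p != lab_id -> exists j, p j != 0.
Proof.
move=> hp; apply/existsP; apply: contraR hp => /existsPn h.
by apply/eqP/ffunP => j; rewrite ffunE; apply/eqP; have := h j; rewrite negbK.
Qed.

End PauliLabels.

Section Pauli.
Variables (R : realType) (n : nat).
Local Notation C := R[i].
Local Notation d := (2 ^ n)%N.
Local Notation P := (@pauli R n).
Implicit Types p q r : pauli_label n.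

Definition lab_phase p q : C := \prod_j lab1_phase R (p j) (q j).

Definition lab_sign p q : C := \prod_j lab1_sign R (p j) (q j).

Lemma pauli_mul p q : P p *m P q = lab_phase p q *: P (lab_mul p q).
Proof.
apply/matrixP => i k; rewrite !mxE.
under eq_bigr => l _ do rewrite !mxE -big_split /=.
pose G (f : {ffun 'I_n -> bool}) :=
  \prod_j (pauli1 R (p j) (bit i j) (f j) * pauli1 R (q j) (f j) (bit k j)).
rewrite (eq_bigr (fun l => G (bits l))); last first.
  by move=> l _; apply: eq_bigr => j _; rewrite ffunE.
rewrite reindex_bits /G -(bigA_distr_bigA (fun j c =>
  pauli1 R (p j) (bit i j) c * pauli1 R (q j) c (bit k j))) /=.
under eq_bigr => j _ do rewrite pauli1_mul.
by rewrite big_split /=; congr (_ * _); apply: eq_bigr => j _; rewrite ffunE.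
Qed.

Lemma pauli_id : P (lab_id n) = 1%:M.
Proof.
apply/matrixP => i k; rewrite !mxE.
have [->|neq_ik] := eqVneq i k.
  by apply: big1 => j _; rewrite ffunE /pauli1 /= eqxx.
have [j hj] := exists_bit_neq neq_ik.
by rewrite (bigD1 j) //= ffunE /pauli1 /= (negbTE hj) mul0r.
Qed.

Lemma pauli_sqr p : P p *m P p = 1%:M.
Proof.
rewrite pauli_mul lab_mulxx pauli_id.
by rewrite [lab_phase _ _]big1 ?scale1r // => j _; rewrite lab1_phasexx.
Qed.

Lemma pauli_commute p q : P p *m P q = lab_sign p q *: (P q *m P p).
Proof.
rewrite !pauli_mul scalerA lab_mulC; congr (_ *: _).
by rewrite -big_split; apply: eq_bigr => j _; rewrite lab1_phaseC.
Qed.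

Lemma lab_signC p q : lab_sign p q = lab_sign q p.
Proof. by apply: eq_bigr => j _; rewrite /lab1_sign lab1_anticommC. Qed.

Lemma lab_signM p q r : lab_sign p (lab_mul q r) = lab_sign p q * lab_sign p r.
Proof. by rewrite -big_split; apply: eq_bigr => j _; rewrite ffunE lab1_signM. Qed.

Lemma lab_sign_pm p q : lab_sign p q = 1 \/ lab_sign p q = -1.
Proof.
apply: (big_ind (fun x : C => x = 1 \/ x = -1)); first by left.
  by move=> x y [->|->] [->|->]; rewrite ?mul1r ?mulr1 ?mulrNN ?mulr1; by [left | right].
by move=> j _; rewrite /lab1_sign; case: lab1_anticomm; [right | left].
Qed.

Lemma lab_sign_id p : lab_sign p (lab_id n) = 1.
Proof. by apply: big1 => j _; rewrite ffunE /lab1_sign lab1_anticomm0. Qed.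

Lemma lab_signxx p : lab_sign p p = 1.
Proof. by apply: big1 => j _; rewrite /lab1_sign lab1_anticommxx. Qed.

Lemma lab_sign_single p k x : lab_sign p (lab_single k x) = lab1_sign R (p k) x.
Proof.
rewrite /lab_sign (bigD1 k) //= big1 => [|j hj]; rewrite ffunE ?eqxx ?mulr1 //.
by rewrite (negbTE hj) /lab1_sign lab1_anticomm0.
Qed.

Lemma exists_lab_anticomm_both q q' : q != lab_id n -> q' != lab_id n ->
  exists r, lab_sign q r = -1 /\ lab_sign q' r = -1.
Proof.
move=> hq hq'.
have [k /andP [hk hk'] | no_common] := pickP (fun k => (q k != 0) && (q' k != 0)).
  have [x /andP [h h']] := exists_lab1_anticomm_both hk hk'.
  by exists (lab_single k x); rewrite !lab_sign_single /lab1_sign h h'.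
have [k hk] := exists_lab_neq0 hq; have [l hl] := exists_lab_neq0 hq'.
have q'k : q' k = 0 by have := no_common k; rewrite hk => /negbFE/eqP.
have ql : q l = 0 by have := no_common l; rewrite hl andbT => /negbFE/eqP.
have [x /andP [hx _]] := exists_lab1_anticomm_both hk hk.
have [y /andP [hy _]] := exists_lab1_anticomm_both hl hl.
exists (lab_mul (lab_single k x) (lab_single l y)).
by rewrite !lab_signM !lab_sign_single q'k ql /lab1_sign hx hy
  !(lab1_anticommC 0) !lab1_anticomm0 mulr1 mul1r.
Qed.

Lemma pauli_dagger p : dagger (P p) = P p.
Proof.
apply/matrixP => i k; rewrite !mxE rmorph_prod.
by apply: eq_bigr => j _; exact: pauli1_conj.
Qed.

Lemma mxtrace_pauli p : p != lab_id n -> \tr (P p) = 0.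
Proof.
move=> /exists_lab_neq0 [j hj]; rewrite /mxtrace.
under eq_bigr => i _ do rewrite mxE.
pose G (f : {ffun 'I_n -> bool}) := \prod_j pauli1 R (p j) (f j) (f j).
rewrite (eq_bigr (fun l => G (bits l))); last first.
  by move=> l _; apply: eq_bigr => j' _; rewrite ffunE.
rewrite reindex_bits /G -(bigA_distr_bigA (fun j c => pauli1 R (p j) c c)) /=.
by rewrite (bigD1 j) //= pauli1_trace (negbTE hj) mul0r.
Qed.

Lemma mx1_neq0 : (1%:M : 'M[C]_d) != 0.
Proof.
apply/negP => /eqP /matrixP /(_ (Ordinal (expn_gt0 2 n)) (Ordinal (expn_gt0 2 n))).
by rewrite !mxE eqxx /= => /eqP; rewrite oner_eq0.
Qed.

Lemma pauli_neq0 p : P p != 0.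
Proof. by apply: contraNneq mx1_neq0 => h; rewrite -(pauli_sqr p) h mul0mx. Qed.

(* Otherwise [P q * P p] would be a traceless multiple of the identity. *)
Lemma pauli_scale_inj p q (c : C) : P p = c *: P q -> p = q.
Proof.
move=> e; apply/eqP; apply: contraT => neq_pq.
have hqp : lab_mul q p != lab_id n.
  by apply: contra neq_pq => /eqP /lab_mul_eq_id ->.
have := congr1 mxtrace (etrans (congr1 (mulmx (P q)) e) (esym (scalemxAr c _ _))).
rewrite pauli_sqr pauli_mul !mxtraceZ mxtrace_pauli // mxtrace1 mulr0.
move=> /esym /eqP; rewrite mulf_eq0 pnatr_eq0 expn_eq0 /= orbF => /eqP c0.
by move: (pauli_neq0 p); rewrite e c0 scale0r eqxx.
Qed.

End Pauli.

Section Dagger.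
Variable R : realType.
Local Notation C := R[i].

Lemma daggerM m k l (A : 'M[C]_(m, k)) (B : 'M[C]_(k, l)) :
  dagger (A *m B) = dagger B *m dagger A.
Proof. by rewrite /dagger map_mxM trmx_mul. Qed.

Lemma daggerD m k (A B : 'M[C]_(m, k)) : dagger (A + B) = dagger A + dagger B.
Proof. by rewrite /dagger map_mxD linearD. Qed.

Lemma daggerZ m k (c : C) (A : 'M[C]_(m, k)) : dagger (c *: A) = (c^*)%C *: dagger A.
Proof. by rewrite /dagger map_mxZ linearZ. Qed.

Lemma dagger1 m : dagger (1%:M : 'M[C]_m) = 1%:M.
Proof. by rewrite /dagger map_mx1 trmx1. Qed.

Lemma dagger_conj_phase m k (c : C) (W : 'M[C]_(k, m)) (X : 'M[C]_k) : `|c| = 1 ->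
  dagger (c *: W) *m X *m (c *: W) = dagger W *m X *m W.
Proof.
move=> hc; rewrite daggerZ -scalemxAl -scalemxAr -scalemxAl scalerA.
by rewrite -normCK hc expr1n scale1r.
Qed.

Lemma unitary_daggerK m (U : 'M[C]_m) : U *m dagger U = 1%:M -> dagger U *m U = 1%:M.
Proof. exact: mulmx1C. Qed.

End Dagger.

Section PowersOfI.
Variable R : realType.
Local Notation C := R[i].

Definition ipow (c : C) := exists k : nat, c = 'i ^+ k.

Lemma ipow1 : ipow 1.
Proof. by exists 0%N. Qed.

Lemma ipowN1 : ipow (-1).
Proof. by exists 2%N; rewrite sqr_i. Qed.

Lemma ipowM x y : ipow x -> ipow y -> ipow (x * y).
Proof. by move=> [a ->] [b ->]; exists (a + b)%N; rewrite exprD. Qed.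

Lemma ipowN x : ipow x -> ipow (- x).
Proof. by move=> hx; rewrite -mulN1r; exact: ipowM ipowN1 hx. Qed.

Lemma ipow_prod (I : finType) (F : I -> C) : (forall i, ipow (F i)) -> ipow (\prod_i F i).
Proof. by move=> h; apply: big_ind => //; [exact: ipow1 | exact: ipowM]. Qed.

Lemma ipow_neq0 x : ipow x -> x != 0.
Proof.
by move=> [k ->]; apply: expf_neq0; apply/eqP => /(congr1 (fun z => z ^+ 2));
  rewrite sqr_i expr0n => /eqP; rewrite oppr_eq0 oner_eq0.
Qed.

Lemma ipow_lab_phase n (p q : pauli_label n) : ipow (lab_phase R p q).
Proof.
apply: ipow_prod => j; rewrite /lab1_phase.
by case_lab (p j); case_lab (q j);
  do ?[exact: ipow1 | exact: ipowN1 | apply: ipowN]; exists 1%N.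
Qed.

Lemma clifford_ipowE n (U : 'M[C]_(2 ^ n)) : clifford U <->
  unitary U /\ forall p, exists q c, ipow c /\ U *m pauli R p *m dagger U = c *: pauli R q.
Proof.
split=> -[hu h]; split=> // p.
  by have [q [k e]] := h p; exists q, ('i ^+ k); split => //; exists (val k).
have [q [c [[k ->] e]]] := h p; exists q, (Ordinal (ltn_pmod k (isT : 0 < 4)%N)).
by rewrite e /= {1}(divn_eq k 4) exprD mulnC exprM [_ ^+ 4](exprM _ 2 2) sqr_i
  sqrrN expr1n expr1n mul1r.
Qed.

End PowersOfI.

Section Clifford.
Variables (R : realType) (n : nat).
Local Notation C := R[i].
Local Notation d := (2 ^ n)%N.
Local Notation P := (@pauli R n).
Implicit Types (p q r : pauli_label n) (U V : 'M[C]_d).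

Lemma clifford1 : clifford (1%:M : 'M[C]_d).
Proof.
apply/clifford_ipowE; split; first by rewrite /unitary dagger1 mul1mx.
by move=> p; exists p, 1; rewrite dagger1 mul1mx mulmx1 scale1r; split; first exact: ipow1.
Qed.

Lemma cliffordM U V : clifford U -> clifford V -> clifford (U *m V).
Proof.
move=> /clifford_ipowE [hu hU] /clifford_ipowE [hv hV]; apply/clifford_ipowE; split.
  by rewrite /unitary daggerM mulmxA -(mulmxA U) hv mulmx1.
move=> p; have [q [c [hc e]]] := hV p; have [r [c' [hc' e']]] := hU q.
exists r, (c * c'); split; first exact: ipowM.
have -> : U *m V *m P p *m dagger (U *m V) = U *m (V *m P p *m dagger V) *m dagger U.
  by rewrite daggerM !mulmxA.
by rewrite e -scalemxAr -scalemxAl e' scalerA.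
Qed.

(* Conjugation by a Clifford unitary induces an injective, hence surjective,
   map on the finitely many Pauli labels; this inverts it. *)
Lemma clifford_conj_dagger U z : clifford U ->
  exists q (c : C), c != 0 /\ dagger U *m P z *m U = c *: P q.
Proof.
move=> /clifford_ipowE [hu hU]; have hu' := unitary_daggerK hu.
have [f hf] := fin_all_exists hU.
have conj_back p c r : c != 0 -> U *m P p *m dagger U = c *: P r ->
    c^-1 *: P p = dagger U *m P r *m U.
  move=> hc e; apply: (canLR (scalerK hc)).
  by rewrite scalemxAl scalemxAr -e !mulmxA hu' mul1mx -mulmxA hu' mulmx1.
have f_inj : injective f.
  move=> p p' epp; have [c [hc e]] := hf p; have [c' [hc' e']] := hf p'.
  rewrite epp in e; have hc0 := ipow_neq0 hc.
  have e1 := conj_back _ _ _ hc0 e; rewrite -(conj_back _ _ _ (ipow_neq0 hc') e') in e1.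
  by apply: (@pauli_scale_inj R n p p' (c / c')); rewrite -[P p](scalerKV hc0) e1 scalerA.
have [c [hc e]] := hf (finv f z); rewrite f_finv // in e.
exists (finv f z), c^-1; split; first by rewrite invr_eq0 ipow_neq0.
by rewrite (conj_back _ _ _ (ipow_neq0 hc) e).
Qed.

End Clifford.

Lemma mulmx_anticomm_sandwich (T : comPzRingType) m (A B X : 'M[T]_m) (a b : T) :
  A *m A = 1%:M -> B *m B = 1%:M -> A *m B = - (B *m A) ->
  A *m X = a *: (X *m A) -> B *m X = b *: (X *m B) ->
  (A + B) *m X *m (A + B) = (a + b) *: X + (a - b) *: (X *m A *m B).
Proof.
move=> hAA hBB hAB hA hB.
have hBA : B *m A = - (A *m B) by rewrite hAB opprK.
have -> : (A + B) *m X = X *m (a *: A + b *: B).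
  by rewrite mulmxDl mulmxDr hA hB !scalemxAr.
rewrite -mulmxA mulmxDl !mulmxDr -!scalemxAl hAA hBB hBA.
rewrite scalerN mulmxN -!scalemxAr mulmx1 !mulmxA.
by apply/matrixP => i j; rewrite !mxE; ring.
Qed.

Lemma half_double (F : numFieldType) (x : F) : (x + x) / 2 = x.
Proof. by rewrite -mulr2n -[x *+ 2]mulr_natr mulfK // pnatr_eq0. Qed.

Section PauliRotation.
Variables (R : realType) (n : nat).
Local Notation C := R[i].
Local Notation d := (2 ^ n)%N.
Local Notation P := (@pauli R n).
Local Notation lab_sign := (@lab_sign R n).
Implicit Types (p q r a b : pauli_label n) (U V : 'M[C]_d).

Definition inv_sqrt2 : C := ((Num.sqrt (2 : R))^-1)%:C%C.

Lemma inv_sqrt2_sqr : inv_sqrt2 * inv_sqrt2 = 2^-1.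
Proof.
by rewrite -rmorphM -invfM -expr2 sqr_sqrtr ?ler0n // fmorphV rmorph_nat.
Qed.

Definition pauli_rot a b : 'M[C]_d := inv_sqrt2 *: (P a + P b).

Lemma pauli_rot_dagger a b : dagger (pauli_rot a b) = pauli_rot a b.
Proof. by rewrite daggerZ daggerD !pauli_dagger conjc_real. Qed.

Lemma pauli_rot_conj a b p : lab_sign a b = -1 ->
  pauli_rot a b *m P p *m pauli_rot a b =
  ((lab_sign a p + lab_sign b p) / 2) *: P p +
  ((lab_sign a p - lab_sign b p) / 2) *: (P p *m P a *m P b).
Proof.
move=> hab; rewrite -scalemxAl -scalemxAl -scalemxAr scalerA inv_sqrt2_sqr.
have hAB : P a *m P b = - (P b *m P a) by rewrite pauli_commute hab scaleN1r.
rewrite (mulmx_anticomm_sandwich (pauli_sqr R a) (pauli_sqr R b) hAB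
  (pauli_commute R a p) (pauli_commute R b p)).
by rewrite scalerDr !scalerA ![2^-1 * _]mulrC.
Qed.

Lemma pauli_rot_sqr a b : lab_sign a b = -1 -> pauli_rot a b *m pauli_rot a b = 1%:M.
Proof.
move=> hab; have := pauli_rot_conj (lab_id n) hab.
by rewrite pauli_id mulmx1 !lab_sign_id half_double subrr mul0r scale0r addr0 scale1r.
Qed.

Lemma pauli_rot_swap a b : lab_sign a b = -1 -> pauli_rot a b *m P a *m pauli_rot a b = P b.
Proof.
move=> hab; rewrite pauli_rot_conj // lab_signxx lab_signC hab opprK.
by rewrite addrN mul0r scale0r add0r half_double scale1r pauli_sqr mul1mx.
Qed.

Lemma pauli_rot_clifford a b : lab_sign a b = -1 -> clifford (pauli_rot a b).
Proof.
move=> hab; apply/clifford_ipowE; split.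
  by rewrite /unitary pauli_rot_dagger pauli_rot_sqr.
move=> p; rewrite pauli_rot_dagger pauli_rot_conj //.
have [q [c [hc ->]]] : exists q c, ipow c /\ P p *m P a *m P b = c *: P q.
  exists (lab_mul (lab_mul p a) b), (lab_phase R p a * lab_phase R (lab_mul p a) b).
  split; first by apply: ipowM; exact: ipow_lab_phase.
  by rewrite pauli_mul -scalemxAl pauli_mul scalerA.
have [-> | ->] := lab_sign_pm R a p; have [-> | ->] := lab_sign_pm R b p;
  rewrite ?opprK ?subrr ?addNr ?mul0r ?scale0r ?addr0 ?add0r half_double.
- by exists p, 1; rewrite scale1r; split; first exact: ipow1.
- by exists q, c; rewrite scale1r.
- by exists q, (- c); rewrite scaleN1r scaleNr; split; first exact: ipowN.
- by exists p, (-1); split; first exact: ipowN1.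
Qed.

Lemma clifford_transitive q q' : q != lab_id n -> q' != lab_id n ->
  exists V, clifford V /\ dagger V *m P q *m V = P q'.
Proof.
move=> hq hq'; have [r [hqr hq'r]] := exists_lab_anticomm_both R hq hq'.
have hrq' : lab_sign r q' = -1 by rewrite lab_signC.
exists (pauli_rot q r *m pauli_rot r q'); split.
  by apply: cliffordM; exact: pauli_rot_clifford.
rewrite daggerM !pauli_rot_dagger.
have -> : pauli_rot r q' *m pauli_rot q r *m P q *m (pauli_rot q r *m pauli_rot r q') =
    pauli_rot r q' *m (pauli_rot q r *m P q *m pauli_rot q r) *m pauli_rot r q'.
  by rewrite !mulmxA.
by rewrite pauli_rot_swap // pauli_rot_swap.
Qed.

End PauliRotation.

Section Expectation.
Variables (R : realType) (n : nat).
Local Notation C := R[i].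
Local Notation d := (2 ^ n)%N.
Local Notation P := (@pauli R n).
Implicit Types (p q : pauli_label n) (U : 'M[C]_d) (phi : 'cV[C]_d).

Lemma Re_sum (I : finType) (F : I -> C) :
  complex.Re (\sum_i F i) = \sum_i complex.Re (F i).
Proof. by apply: big_morph => // -[a b] [a' b']. Qed.

Definition zstring (z : {ffun 'I_n -> bool}) : pauli_label n :=
  [ffun j => if z j then inord 3 else 0].

Definition zsign (z : {ffun 'I_n -> bool}) (s : 'I_d) : R :=
  \prod_j (if z j && bit s j then -1 else 1).

Lemma pauli_zstring z (i k : 'I_d) :
  P (zstring z) i k = if i == k then (zsign z i)%:C%C else 0.
Proof.
rewrite mxE; have [<-|neq_ik] := eqVneq i k.
  rewrite rmorph_prod; apply: eq_bigr => j _; rewrite ffunE.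
  by case: (z j); case: (bit i j); rewrite /pauli1 /= ?inordK //= ?rmorphN ?rmorph1.
have [j hj] := exists_bit_neq neq_ik.
by rewrite (bigD1 j) //= ffunE; case: (z j); rewrite /pauli1 /= ?inordK //= (negbTE hj) mul0r.
Qed.

Lemma expect_zstring phi z :
  pauli_expect phi (zstring z) = \sum_s zsign z s * sqnorm (phi s 0).
Proof.
rewrite /pauli_expect mxE Re_sum; apply: eq_bigr => k _.
rewrite mxE (bigD1 k) //= big1 => [|i hik]; last by rewrite pauli_zstring (negbTE hik) mulr0.
by rewrite pauli_zstring eqxx addr0 !mxE; case: (phi k 0) => a b; rewrite /sqnorm /=; ring.
Qed.

Lemma zstring0 : zstring [ffun => false] = lab_id n.
Proof. by apply/ffunP => j; rewrite !ffunE. Qed.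

Lemma zstring_neq_id z : z != [ffun => false] -> zstring z != lab_id n.
Proof.
apply: contraNneq => /ffunP h; apply/eqP/ffunP => j.
by have := h j; rewrite !ffunE; case: (z j) => // /(congr1 val); rewrite /= inordK.
Qed.

Lemma expect_id phi : normalized phi -> pauli_expect phi (lab_id n) = 1.
Proof.
rewrite -zstring0 expect_zstring => <-; apply: eq_bigr => s _.
by rewrite [zsign _ _]big1 ?mul1r // => j _; rewrite ffunE.
Qed.

(* Conjugating [P z] into [c P q] forces [c = 1] or [c = -1], as both
   sides square to the identity; the sign disappears in the fourth power. *)
Lemma expect_conj_pow4 phi U z q c : unitary U ->
  dagger U *m P z *m U = c *: P q ->
  pauli_expect (U *m phi) z ^+ 4 = pauli_expect phi q ^+ 4.
Proof.
move=> hu e; have hu' := unitary_daggerK hu.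
have : (c ^+ 2) *: 1%:M = 1%:M :> 'M[C]_d.
  rewrite -{1}(pauli_sqr R q) expr2 -scalerA scalemxAr scalemxAl -e.
  have -> : dagger U *m P z *m U *m (dagger U *m P z *m U) =
      dagger U *m (P z *m (U *m dagger U) *m P z) *m U by rewrite !mulmxA.
  by rewrite hu mulmx1 pauli_sqr mulmx1 hu'.
have i0 : 'I_d := Ordinal (expn_gt0 2 n).
move=> /matrixP /(_ i0 i0); rewrite !mxE eqxx mulr1 => /eqP; rewrite sqrf_eq1.
have expect_conj : pauli_expect (U *m phi) z =
    complex.Re ((dagger phi *m (c *: P q) *m phi) 0 0).
  by rewrite /pauli_expect -e daggerM !mulmxA.
rewrite expect_conj => /orP [] /eqP ->; rewrite ?scale1r //.
by rewrite scaleN1r mulmxN mulNmx mxE /pauli_expect; case: (_ 0 0) => a b /=; ring.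
Qed.

End Expectation.

Section CliffordTwirl.
Variables (R : realType) (n : nat).
Local Notation C := R[i].
Local Notation d := (2 ^ n)%N.
Local Notation P := (@pauli R n).
Implicit Types (p q : pauli_label n) (U V : 'M[C]_d).

Variable reps : seq 'M[C]_d.
Hypothesis hreps : clifford_transversal reps.
Local Notation m := (size reps).
Local Notation U j := (nth 0 reps j).

Lemma transversal_clifford (j : 'I_m) : clifford (U j).
Proof. by apply: hreps.1; exact: mem_nth. Qed.

Lemma transversal_size_gt0 : (0 < m)%N.
Proof. by have [j _] := hreps.2 _ (clifford1 R n); exact: leq_ltn_trans (leq0n j) (ltn_ord j). Qed.

Lemma transversal_shift V : clifford V ->
  exists h : 'I_m -> 'I_m, injective h /\ forall j : 'I_m, phase_equiv (U j *m V) (U (h j)).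
Proof.
move=> hV; have hVu : V *m dagger V = 1%:M by case: hV.
have image_rep (j : 'I_m) : exists k : 'I_m, phase_equiv (U j *m V) (U k).
  by have [k [hk _]] := hreps.2 _ (cliffordM (transversal_clifford j) hV); exists k.
have [h hh] := fin_all_exists image_rep.
exists h; split => // j k ejk.
have [c [hc ec]] := hh j; have [c' [hc' ec']] := hh k; rewrite ejk in ec.
have pjk : phase_equiv (U j) (U k).
  exists (c / c'); split; first by rewrite normrM normfV hc hc' invr1 mulr1.
  rewrite -[U j]mulmx1 -[U k]mulmx1 -hVu !mulmxA ec ec' -!scalemxAl scalerA.
  by rewrite divfK // -normr_eq0 hc' oner_neq0.
have [x [_ uniq_x]] := hreps.2 _ (transversal_clifford j).
rewrite -(uniq_x j) ?(uniq_x k) //.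
by exists 1; rewrite normr1 scale1r.
Qed.

Section ConjugationLabels.
Variables (z : pauli_label n) (lab : 'I_m -> pauli_label n).
Hypothesis hlab : forall j : 'I_m, exists c : C, c != 0 /\
  dagger (U j) *m P z *m U j = c *: P (lab j).

Lemma lab_neq_id j : z != lab_id n -> lab j != lab_id n.
Proof.
move=> hz; apply: contra_neq hz => ej; have [c [_ e]] := hlab j.
have [hu _] := transversal_clifford j; have hu' := unitary_daggerK hu.
apply: (@pauli_scale_inj R n z (lab_id n) c).
have -> : P z = U j *m (dagger (U j) *m P z *m U j) *m dagger (U j).
  by rewrite !mulmxA hu mul1mx -mulmxA hu mulmx1.
by rewrite e ej !pauli_id -scalemxAr mulmx1 -scalemxAl hu.
Qed.

Lemma card_lab_fiber_le q1 q2 : q1 != lab_id n -> q2 != lab_id n ->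
  (#|[set j | lab j == q1]| <= #|[set j | lab j == q2]|)%N.
Proof.
move=> hq1 hq2; have [V [hV eV]] := clifford_transitive R hq1 hq2.
have [h [h_inj hh]] := transversal_shift hV.
have lab_h j : lab j = q1 -> lab (h j) = q2.
  move=> ej; have [c [hc ec]] := hh j.
  have [c0 [hc0 e0]] := hlab j; have [c1 [hc1 e1]] := hlab (h j).
  have eU : U (h j) = c^-1 *: (U j *m V).
    by rewrite ec scalerA mulVf ?scale1r // -normr_eq0 hc oner_neq0.
  rewrite eU dagger_conj_phase ?normfV ?hc ?invr1 // daggerM in e1.
  have : dagger V *m (dagger (U j) *m P z *m U j) *m V = c1 *: P (lab (h j)).
    by rewrite -e1 !mulmxA.
  rewrite e0 ej -scalemxAr -scalemxAl eV => e2.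
  apply/(@pauli_scale_inj R n _ _ (c1^-1 * c0)).
  by rewrite -[P (lab _)](scalerK hc1) -e2 scalerA.
rewrite -(card_imset _ h_inj); apply: subset_leq_card; apply/subsetP => y.
by case/imsetP => j; rewrite !inE => /eqP /lab_h <- ->.
Qed.

Lemma sum_lab (F : pauli_label n -> R) : z != lab_id n ->
  \sum_j F (lab j) = #|[set j | lab j == z]|%:R * \sum_(q | q != lab_id n) F q.
Proof.
move=> hz; rewrite (partition_big lab predT) //= (bigD1 (lab_id n)) //=.
rewrite big_pred0 => [|j]; last by apply/negbTE/lab_neq_id.
rewrite add0r mulr_sumr; apply: eq_bigr => q hq.
rewrite (eq_bigr (fun=> F q)); last by move=> j /eqP ->.
rewrite sumr_const mulr_natl; congr (_ *+ _).
rewrite -(@eq_card _ [set j | lab j == q]) => [|j]; last by rewrite inE.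
by apply/eqP; rewrite eqn_leq !card_lab_fiber_le.
Qed.

Lemma avg_lab (F : pauli_label n -> R) : z != lab_id n ->
  m%:R^-1 * \sum_j F (lab j) = (4 ^ n).-1%:R^-1 * \sum_(q | q != lab_id n) F q.
Proof.
move=> hz; have := sum_lab (fun=> 1) hz.
rewrite sumr_const card_ord sumr_const cardC1 card_ffun !card_ord => hm.
have : (m%:R : R) != 0 by rewrite pnatr_eq0 -lt0n transversal_size_gt0.
rewrite hm mulf_eq0 negb_or => /andP [hN hK].
rewrite (sum_lab F hz); field; exact/andP.
Qed.

End ConjugationLabels.

Lemma clifford_twirl_pow4 psi z : z != lab_id n ->
  m%:R^-1 * \sum_(j < m) pauli_expect (U j *m psi) z ^+ 4 =
  (4 ^ n).-1%:R^-1 * \sum_(q | q != lab_id n) pauli_expect psi q ^+ 4.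
Proof.
move=> hz.
have [lab hlab] := fin_all_exists (fun j => clifford_conj_dagger z (transversal_clifford j)).
rewrite -(avg_lab hlab _ hz); congr (_ * _); apply: eq_bigr => j _.
have [c [_ e]] := hlab j; exact: expect_conj_pow4 (transversal_clifford j).1 e.
Qed.

End CliffordTwirl.

Section FourfoldSums.
Variables (R : comPzRingType) (I : finType).

Lemma sumr_pow4 (a : I -> R) :
  (\sum_i a i) ^+ 4 = \sum_i \sum_j \sum_k \sum_l a i * a j * a k * a l.
Proof.
rewrite -(mulr1 (_ ^+ 4)) !exprS expr0 !mulr1 mulr_suml; apply: eq_bigr => i _.
rewrite mulr_suml mulr_sumr; apply: eq_bigr => j _.
rewrite mulr_suml !mulr_sumr; apply: eq_bigr => k _.
by rewrite !mulr_sumr; apply: eq_bigr => l _; rewrite !mulrA.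
Qed.

Lemma mulr_sum4 (c : R) (F : I -> I -> I -> I -> R) :
  c * (\sum_i \sum_j \sum_k \sum_l F i j k l) =
  \sum_i \sum_j \sum_k \sum_l c * F i j k l.
Proof.
rewrite mulr_sumr; apply: eq_bigr => i _; rewrite mulr_sumr; apply: eq_bigr => j _.
by rewrite mulr_sumr; apply: eq_bigr => k _; rewrite mulr_sumr.
Qed.

Lemma exchange_sum4 (J : finType) (F : J -> I -> I -> I -> I -> R) :
  \sum_i \sum_j \sum_k \sum_l \sum_x F x i j k l =
  \sum_x \sum_i \sum_j \sum_k \sum_l F x i j k l.
Proof.
rewrite [RHS]exchange_big; apply: eq_bigr => i _; rewrite [RHS]exchange_big.
apply: eq_bigr => j _; rewrite [RHS]exchange_big; apply: eq_bigr => k _.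
exact: exchange_big.
Qed.

End FourfoldSums.

Section XorWeight.
Variables (R : realType) (n : nat).
Local Notation d := (2 ^ n)%N.
Local Notation zsign := (@zsign R n).

Definition three_pow_weight (z : {ffun 'I_n -> bool}) : R :=
  \prod_j (if z j then 3 else 1).

Lemma sum_three_pow_weight : \sum_z three_pow_weight z = (4 ^ n)%:R.
Proof.
rewrite -(bigA_distr_bigA (fun j (t : bool) => if t then (3 : R) else 1)) /=.
under eq_bigr => j _ do rewrite big_bool /=.
by rewrite prodr_const card_ord natrX; congr (_ ^+ _); ring.
Qed.

Lemma three_pow_weight0 : three_pow_weight [ffun => false] = 1.
Proof. by apply: big1 => j _; rewrite ffunE. Qed.

Lemma xor_weight_expansion (s1 s2 s3 s4 : 'I_d) :
  (-2 : R) ^- xor_weight s1 s2 s3 s4 =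
  4^-1 ^+ n * \sum_z three_pow_weight z *
    (zsign z s1 * zsign z s2 * zsign z s3 * zsign z s4).
Proof.
pose b j := bit s1 j (+) bit s2 j (+) bit s3 j (+) bit s4 j.
have -> : (-2 : R) ^- xor_weight s1 s2 s3 s4 = \prod_j (if b j then (-2)^-1 else 1).
  rewrite /xor_weight -exprVn -prodr_const big_mkcond /=.
  by apply: eq_bigr => j _; rewrite inE.
have bitwise (c : bool) : (if c then (-2 : R)^-1 else 1) =
    4^-1 * \sum_(t : bool) (if t then 3 * (if c then -1 else 1) else 1).
  by case: c; rewrite big_bool /=; field.
under eq_bigr => j _ do rewrite bitwise.
rewrite big_split /= prodr_const card_ord bigA_distr_bigA; congr (_ * _).
apply: eq_bigr => z _; rewrite /three_pow_weight /zsign -!big_split /=.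
apply: eq_bigr => j _; rewrite /b.
by case: (z j); case: (bit s1 j); case: (bit s2 j); case: (bit s3 j);
  case: (bit s4 j); rewrite /=; ring.
Qed.

Lemma sum4_xor_weight_prod (p : 'I_d -> R) :
  \sum_(s1 : 'I_d) \sum_(s2 : 'I_d) \sum_(s3 : 'I_d) \sum_(s4 : 'I_d)
    (-2 : R) ^- xor_weight s1 s2 s3 s4 * (p s1 * p s2 * p s3 * p s4) =
  4^-1 ^+ n * \sum_z three_pow_weight z * (\sum_s zsign z s * p s) ^+ 4.
Proof.
under [in RHS]eq_bigr => z _ do rewrite sumr_pow4 mulr_sum4.
rewrite -exchange_sum4 mulr_sum4.
apply: eq_bigr => s1 _; apply: eq_bigr => s2 _; apply: eq_bigr => s3 _.
apply: eq_bigr => s4 _; rewrite xor_weight_expansion -mulrA mulr_suml.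
by congr (_ * _); apply: eq_bigr => z _; ring.
Qed.

End XorWeight.

Section WeightedOutcomeMoments.
Variables (R : realType) (n : nat).
Local Notation C := R[i].
Local Notation d := (2 ^ n)%N.
Variables (psi : 'cV[C]_d) (reps : seq 'M[C]_d).
Local Notation m := (size reps).
Local Notation U j := (nth 0 reps j).
Local Notation z0 := ([ffun => false] : {ffun 'I_n -> bool}).

Lemma weighted_Qavg_sum_twirl :
  \sum_(s1 : 'I_d) \sum_(s2 : 'I_d) \sum_(s3 : 'I_d) \sum_(s4 : 'I_d)
    (-2 : R) ^- xor_weight s1 s2 s3 s4 * Qavg psi reps s1 s2 s3 s4 =
  4^-1 ^+ n * \sum_z three_pow_weight R z *
    (m%:R^-1 * \sum_(j < m) pauli_expect (U j *m psi) (zstring z) ^+ 4).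
Proof.
rewrite /Qavg; under eq_bigr => s1 _ do under eq_bigr => s2 _ do
  under eq_bigr => s3 _ do under eq_bigr => s4 _ do
    rewrite (big_nth 0) big_mkord mulrCA mulr_sumr.
rewrite -mulr_sum4 exchange_sum4.
under eq_bigr => j _ do rewrite sum4_xor_weight_prod.
under eq_bigr => j _ do under eq_bigr => z _ do rewrite -expect_zstring.
rewrite -mulr_sumr mulrCA exchange_big mulr_sumr; congr (_ * _).
by apply: eq_bigr => z _; rewrite -mulr_sumr mulrCA.
Qed.

Hypothesis n_gt0 : (0 < n)%N.
Hypothesis hpsi : normalized psi.
Hypothesis hreps : clifford_transversal reps.

Lemma sum_three_pow_weight_twirl :
  \sum_z three_pow_weight R z *
    (m%:R^-1 * \sum_(j < m) pauli_expect (U j *m psi) (zstring z) ^+ 4) =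
  \sum_q pauli_expect psi q ^+ 4.
Proof.
have expect_id_pow4 (j : 'I_m) : pauli_expect (U j *m psi) (lab_id n) ^+ 4 = 1.
  have [hu _] := transversal_clifford hreps j.
  rewrite (expect_conj_pow4 _ hu (c := 1) (q := lab_id n)) ?expect_id ?expr1n //.
  by rewrite pauli_id mulmx1 scale1r unitary_daggerK.
rewrite (bigD1 z0) //= zstring0 three_pow_weight0 mul1r.
under eq_bigr do rewrite expect_id_pow4.
rewrite sumr_const card_ord mulVf ?pnatr_eq0 -?lt0n ?transversal_size_gt0 //.
rewrite [in RHS](bigD1 (lab_id n)) //= expect_id // expr1n; congr (_ + _).
under eq_bigr => z hz do rewrite (clifford_twirl_pow4 hreps psi (zstring_neq_id hz)).
rewrite -mulr_suml.
have -> : \sum_(z | z != z0) three_pow_weight R z = (4 ^ n).-1%:R.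
  have := sum_three_pow_weight R n; rewrite (bigD1 z0) //= three_pow_weight0 => hsum.
  by apply: (@addrI _ 1); rewrite hsum addrC natr1 prednK ?expn_gt0.
rewrite mulVKf // pnatr_eq0 -lt0n -ltnS prednK ?expn_gt0 //.
by rewrite -[1%N](expn0 4) ltn_exp2l.
Qed.

End WeightedOutcomeMoments.

Lemma inv_exp2n_sqr (R : unitRingType) (n : nat) : ((2 ^ n)%:R^-1 : R) ^+ 2 = 4^-1 ^+ n.
Proof. by rewrite natrX -exprVn -exprM mulnC exprM exprVn -natrX. Qed.

Unset Implicit Arguments.

Theorem mainTheorem3 (R : realType) (n : nat) (hn : (1 <= n)%N)
  (psi : 'cV[R[i]]_(2 ^ n)) (hpsi : normalized psi)
  (reps : seq 'M[R[i]]_(2 ^ n)) (hreps : clifford_transversal reps) :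
  M2 psi =
  - log2 (\sum_(s1 : 'I_(2 ^ n)) \sum_(s2 : 'I_(2 ^ n))
            \sum_(s3 : 'I_(2 ^ n)) \sum_(s4 : 'I_(2 ^ n))
            ((-2 : R) ^- xor_weight s1 s2 s3 s4) * Qavg psi reps s1 s2 s3 s4)
  - log2 (2 ^ n)%:R.
Proof.
rewrite /M2 (weighted_Qavg_sum_twirl psi reps) (sum_three_pow_weight_twirl hn hpsi hreps).
rewrite mulr_sumr.
by under eq_bigr => p _ do rewrite /Xi exprMn -exprM inv_exp2n_sqr.
Qed.
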